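(* Let $q$ be a prime power, $\eta\ge0$ an integer, $(\delta_T,\delta_X)\in\mathbb{Z}\times\mathbb{N}$ with $\delta=\delta_T+\eta\delta_X\ge0$. Then: (1) the map $p$ (defined in the context) induces a bijection from the quotient set $\mathcal{P}(\delta_T,\delta_X)/\equiv$ onto $\mathcal{K}(\delta_T,\delta_X)$; (2) $\mathcal{K}(\delta_T,\delta_X)$ is a set of representatives of $\mathcal{P}(\delta_T,\delta_X)$ under $\equiv$; (3) $\Delta(\delta_T,\delta_X)=\{M(\alpha,\beta):(\alpha,\beta)\in\mathcal{K}(\delta_T,\delta_X)\}$ is a set of representatives of the set of monomials of bidegree $(\delta_T,\delta_X)$ under $\equiv$.
   Context: $R=\mathbb{F}_q[T_1,T_2,X_1,X_2]$; the bidegree of $T_1^{c_1}T_2^{c_2}X_1^{d_1}X_2^{d_2}$ is $(c_1+c_2-\eta d_1,d_1+d_2)$. The Hirzebruch surface $\mathcal{H}_\eta$ is the quotient of $(\mathbb{A}^2\setminus\{0\})^2$ by $\mathbb{G}_m^2$ acting by $(\lambda,\mu)\cdot(t_1,t_2,x_1,x_2)=(\lambda t_1,\lambda t_2,\mu\lambda^{-\eta}x_1,\mu x_2)$; each $\mathbb{F}_q$-point has a unique representative of the form $(1,a,1,b)$, $(0,1,1,b)$, $(1,a,0,1)$ or $(0,1,0,1)$ ($a,b\in\mathbb{F}_q$), where polynomials are evaluated. Two monomials of bidegree $(\delta_T,\delta_X)$ are equivalent ($\equiv$) if they take the same value at every $\mathbb{F}_q$-point. $\mathcal{P}(\delta_T,\delta_X)=\{(a,b)\in\mathbb{N}^2: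 a\le\delta_X,\ \eta a+b\le\delta\}$; for $(d_2,c_2)\in\mathcal{P}(\delta_T,\delta_X)$, $M(d_2,c_2)=T_1^{\delta-\eta d_2-c_2}T_2^{c_2}X_1^{\delta_X-d_2}X_2^{d_2}$ (a bijection onto the monomials of bidegree $(\delta_T,\delta_X)$), and $(d_2,c_2)\equiv(d'_2,c'_2)$ iff $M(d_2,c_2)\equiv M(d'_2,c'_2)$. $A=\delta_X$ if $\delta_T\ge0$, $A=\delta/\eta$ if $\delta_T<0$. $\mathcal{A}_X=\{\alpha\in\mathbb{N}:\alpha\le\min(\lfloor A\rfloor,q-1)\}\cup(\{A\}\cap\mathbb{N})$, $\mathcal{K}(\delta_T,\delta_X)=\{(\alpha,\beta)\in\mathbb{N}^2:\alpha\in\mathcal{A}_X,\ \beta\le\min(\delta-\eta\alpha,q)-1\text{ or }\beta=\delta-\eta\alpha\}$. The map $p:\mathcal{P}(\delta_T,\delta_X)\to\mathcal{P}(\delta_T,\delta_X)$, $(d_2,c_2)\mapsto(d'_2,c'_2)$: $d'_2=d_2$ if $d_2=0$ or $d_2=A$, otherwise $d'_2$ is the element of $\{1,\dots,q-1\}$ congruent to $d_2$ mod $q-1$; $c'_2=0$ if $c_2=0$; $c'_2=\delta-\eta d'_2$ if $c_2=\delta-\eta d_2$; otherwise $c'_2$ is the element of $\{1,\dots,q-1\}$ congruent to $c_2$ mod $q-1$. *)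

From HB Require Import structures.
From mathcomp Require Import all_boot all_order all_algebra.
Set Implicit Arguments. Unset Strict Implicit. Unset Printing Implicit Defensive.
Import Order.TTheory GRing.Theory Num.Theory.
Local Open Scope ring_scope.

(* A monomial T1^c1 T2^c2 X1^d1 X2^d2 is represented by its exponent
   tuple (c1, c2, d1, d2). *)
Definition monomial := (nat * nat * nat * nat)%type.

Definition bideg (eta : nat) (m : monomial) : int * nat :=
  let: (c1, c2, d1, d2) := m in
  ((c1 + c2)%:Z - (eta * d1)%:Z, (d1 + d2)%N).

(* evaluation of a monomial at (t1, t2, x1, x2) (with 0^0 = 1) *)
Definition eval_mono (F : fieldType) (m : monomial) (pt : F * F * F * F) : F :=
  let: (c1, c2, d1, d2) := m in
  let: (t1, t2, x1, x2) := pt in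
  t1 ^+ c1 * t2 ^+ c2 * x1 ^+ d1 * x2 ^+ d2.

(* The F-points of the Hirzebruch surface, through their unique
   representatives (1,a,1,b), (0,1,1,b), (1,a,0,1), (0,1,0,1). *)
Definition hpoint (F : fieldType) (pt : F * F * F * F) : Prop :=
  exists a b : F,
    pt = (1, a, 1, b) \/ pt = (0, 1, 1, b) \/ pt = (1, a, 0, 1) \/ pt = (0, 1, 0, 1).

Definition mono_equiv (F : fieldType) (m m' : monomial) : Prop :=
  forall pt : F * F * F * F, hpoint pt -> eval_mono m pt = eval_mono m' pt.

Definition hdelta (eta : nat) (dT : int) (dX : nat) : int := dT + (eta * dX)%N%:Z.

Definition Pset (eta : nat) (dT : int) (dX : nat) (x : nat * nat) : Prop :=
  (x.1 <= dX)%N /\ (eta * x.1 + x.2)%N%:Z <= hdelta eta dT dX.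

Definition Mmono (eta : nat) (dT : int) (dX : nat) (x : nat * nat) : monomial :=
  let: (d2, c2) := x in
  (absz (hdelta eta dT dX - (eta * d2 + c2)%N%:Z), c2, (dX - d2)%N, d2).

Definition P_equiv (F : fieldType) (eta : nat) (dT : int) (dX : nat)
  (x y : nat * nat) : Prop :=
  mono_equiv F (Mmono eta dT dX x) (Mmono eta dT dX y).

Definition Aval (eta : nat) (dT : int) (dX : nat) : rat :=
  if 0 <= dT then dX%:R else (hdelta eta dT dX)%:~R / eta%:R.

Definition AXset (q eta : nat) (dT : int) (dX : nat) (a : nat) : Prop :=
  (a%:Z <= Num.floor (Aval eta dT dX) /\ (a <= q - 1)%N)
  \/ (a%:R : rat) = Aval eta dT dX.

Definition Kset (q eta : nat) (dT : int) (dX : nat) (x : nat * nat) : Prop :=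
  AXset q eta dT dX x.1 /\
  (x.2%:Z <= Num.min (hdelta eta dT dX - (eta * x.1)%N%:Z) q%:Z - 1
   \/ x.2%:Z = hdelta eta dT dX - (eta * x.1)%N%:Z).

(* for n >= 1 (and q >= 2): the element of {1, ..., q-1} congruent to n mod q-1 *)
Definition redq (q n : nat) : nat := ((n.-1 %% q.-1).+1)%N.

Definition pHmap (q eta : nat) (dT : int) (dX : nat) (x : nat * nat) : nat * nat :=
  let: (d2, c2) := x in
  let d2' := if (d2 == 0)%N || ((d2%:R : rat) == Aval eta dT dX) then d2
             else redq q d2 in
  let c2' := if (c2 == 0)%N then 0%N
             else if c2%:Z == hdelta eta dT dX - (eta * d2)%N%:Z
                  then absz (hdelta eta dT dX - (eta * d2')%N%:Z)
                  else redq q c2 in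
  (d2', c2').

Definition Deltaset (q eta : nat) (dT : int) (dX : nat) (m : monomial) : Prop :=
  exists2 k, Kset q eta dT dX k & m = Mmono eta dT dX k.

From HB Require Import structures.
From mathcomp Require Import all_boot all_order all_algebra.
From mathcomp Require Import finfield zify.
Import Order.TTheory GRing.Theory Num.Theory.
Local Open Scope ring_scope.

(* Over a field F with q elements, a^c = a^c' for every a in F iff c and c'
   are both 0 or are both positive and congruent modulo q - 1.  Evaluating at
   the points (1,a,1,1), (1,1,1,b), (0,1,1,1) and (1,1,0,1) then shows that
   M(d2,c2) is determined up to equivalence by the classes of c2 and d2 and by
   whether delta - eta d2 - c2 and delta_X - d2 vanish.  The map p preserves
   these four data, sends P into K and fixes K; conversely the four data
   determine p, so x == y exactly when p x = p y, and all three statements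
   follow. *)

Section Redq.
Local Open Scope nat_scope.
Variable q : nat.

Lemma redq_leq c : 1 < q -> redq q c <= q.-1.
Proof. by move=> q_gt1; rewrite /redq ltn_pmod //; lia. Qed.

Lemma redq_small c : 0 < c -> c <= q.-1 -> redq q c = c.
Proof. by move=> c_gt0 c_le; rewrite /redq modn_small; lia. Qed.

Lemma leq_redq c : 0 < c -> redq q c <= c.
Proof. by case: c => // c _; rewrite /redq ltnS leq_mod. Qed.

Lemma redq_idem c : 1 < q -> redq q (redq q c) = redq q c.
Proof. by move=> q_gt1; rewrite redq_small ?redq_leq. Qed.

Lemma redq_div_eq c : 0 < c -> c = redq q c + c.-1 %/ q.-1 * q.-1.
Proof. by move=> c_gt0; rewrite /redq; have := divn_eq c.-1 q.-1; lia. Qed.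

Lemma redqDM c k : 0 < c -> redq q (c + k * q.-1) = redq q c.
Proof. by case: c => // c _; rewrite /redq addSn /= addnC modnMDl. Qed.

End Redq.

Definition exp_class (q c : nat) : nat := if c == 0%N then 0%N else redq q c.

Lemma exp_class_eq0 q c : (exp_class q c == 0%N) = (c == 0%N).
Proof. by case: c. Qed.

Lemma exp_classE q c : (0 < c)%N -> exp_class q c = redq q c.
Proof. by case: c. Qed.

Lemma exp_class_lt q c : (1 < q)%N -> (exp_class q c < q)%N.
Proof.
move=> q_gt1; rewrite /exp_class; case: ifP => _; first lia.
by have := redq_leq q c q_gt1; lia.
Qed.

Section FiniteFieldPowers.
Variable F : finFieldType.

Lemma exprDM_card_pred (a : F) n k : a ^+ (n.+1 + k * #|F|.-1) = a ^+ n.+1.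
Proof.
have q_gt0 : (0 < #|F|)%N := ltnW (card_finNzRing_gt1 F).
elim: k => [|k IHk]; first by rewrite addn0.
have -> : (n.+1 + k.+1 * #|F|.-1 = (n + k * #|F|.-1) + #|F|)%N.
  by rewrite mulSn; move: (k * _)%N => m; lia.
by rewrite exprD expf_card -exprSr -addSn.
Qed.

Lemma expr_exp_class (a : F) c : a ^+ c = a ^+ exp_class #|F| c.
Proof.
case: c => [//|c]; rewrite exp_classE // {1}(redq_div_eq #|F| _ (ltn0Sn c)).
by rewrite /redq exprDM_card_pred.
Qed.

(* Otherwise ['X^r - 'X^r'] would have more roots than its degree. *)
Lemma eq_expr_small r r' : (r < #|F|)%N -> (r' < #|F|)%N ->
  (forall a : F, a ^+ r = a ^+ r') -> r = r'.
Proof.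
move=> r_lt r'_lt E; apply/eqP/negPn/negP => r_neq.
pose p : {poly F} := 'X^r - 'X^r'.
have p_neq0 : p != 0.
  apply/eqP => /(congr1 (fun p : {poly F} => p`_r)).
  by rewrite coef0 coefB !coefXn eqxx (negPf r_neq) subr0 => /eqP; rewrite oner_eq0.
have all_roots : all (root p) (enum F).
  by apply/allP => a _; rewrite /root /p !hornerE E subrr.
have size_p : (size p <= #|F|)%N.
  by apply: leq_trans (size_polyD _ _) _; rewrite size_polyN !size_polyXn; lia.
have := max_poly_roots p_neq0 all_roots (enum_uniq F).
by rewrite -cardE ltnNge size_p.
Qed.

Lemma exp_classP c c' :
  (forall a : F, a ^+ c = a ^+ c') <-> exp_class #|F| c = exp_class #|F| c'.
Proof.
split=> [E|E a]; last by rewrite expr_exp_class E -expr_exp_class.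
apply: eq_expr_small; rewrite ?exp_class_lt ?card_finNzRing_gt1 // => a.
by rewrite -!expr_exp_class.
Qed.

End FiniteFieldPowers.

Definition mono_signature (q : nat) (m : monomial) : nat * nat * bool * bool :=
  let: (c1, c2, d1, d2) := m in
  (exp_class q c2, exp_class q d2, c1 == 0%N, d1 == 0%N).

Lemma mono_equivP (F : finFieldType) (m m' : monomial) :
  mono_equiv F m m' <-> mono_signature #|F| m = mono_signature #|F| m'.
Proof.
case: m m' => [[[c1 c2] d1] d2] [[[c1' c2'] d1'] d2'] /=.
have zero_pow n n' : (0 : F) ^+ n = 0 ^+ n' <-> (n == 0%N) = (n' == 0%N).
  rewrite !expr0n; split=> [|-> //].
  by case: (n == 0%N); case: (n' == 0%N) => // /eqP; rewrite ?oner_eq0 // eq_sym oner_eq0.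
split=> [E|[/exp_classP Ec2 /exp_classP Ed2 /zero_pow Ec1 /zero_pow Ed1]].
- congr (_, _, _, _).
  + apply/exp_classP => a; have := E (1, a, 1, 1).
    by rewrite /eval_mono !expr1n !mulr1 !mul1r; apply; exists a, 1; left.
  + apply/exp_classP => b; have := E (1, 1, 1, b).
    by rewrite /eval_mono !expr1n !mul1r; apply; exists 1, b; left.
  + apply/zero_pow; have := E (0, 1, 1, 1).
    by rewrite /eval_mono !expr1n !mulr1; apply; exists 1, 1; right; left.
  + apply/zero_pow; have := E (1, 1, 0, 1).
    by rewrite /eval_mono !expr1n !mulr1 !mul1r; apply; exists 1, 1; right; right; left.
- move=> pt [a [b pt_eq]].
  by case: pt_eq => [|[|[|]]] ->; rewrite /eval_mono ?expr1n ?Ec1 ?Ed1 ?Ec2 ?Ed2.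
Qed.

Section NatModel.
Local Open Scope nat_scope.
Variables q eta dX D : nat.

Definition is_A a := [&& a <= dX, eta * a <= D & (a == dX) || (eta * a == D) && (0 < eta)].

Definition inP (x : nat * nat) := (x.1 <= dX) && (eta * x.1 + x.2 <= D).

Definition inAX a := (a <= dX) && (eta * a <= D) && (a <= q - 1) || is_A a.

Definition inK (x : nat * nat) :=
  inAX x.1 && ((eta * x.1 + x.2 < D) && (x.2 < q) || (eta * x.1 + x.2 == D)).

Definition pmap_d2 d2 := if (d2 == 0) || is_A d2 then d2 else redq q d2.

Definition pmap (x : nat * nat) : nat * nat :=
  let: (d2, c2) := x in
  (pmap_d2 d2,
   if c2 == 0 then 0 else if eta * d2 + c2 == D then D - eta * pmap_d2 d2 else redq q c2).

Definition Mnat (x : nat * nat) : monomial := (D - (eta * x.1 + x.2), x.2, dX - x.1, x.1).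

Definition signature x := mono_signature q (Mnat x).

Lemma inK_inP x : inK x -> inP x.
Proof.
case: x => a b; rewrite /inK /inAX /inP /is_A /= => /andP [Ka Kb].
by apply/andP; split; [move: Ka|move: Kb]; case/orP; try case/andP; try case/andP; lia.
Qed.

Lemma pmap_d2E d2 : ~~ is_A d2 -> pmap_d2 d2 = exp_class q d2.
Proof. by rewrite /pmap_d2 /exp_class => /negPf ->; rewrite orbF; case: eqP => [->|]. Qed.

Lemma leq_pmap_d2 d2 : pmap_d2 d2 <= d2.
Proof. by rewrite /pmap_d2; case: ifP => // /norP [d2_neq0 _]; rewrite leq_redq // lt0n. Qed.

Hypothesis q_gt1 : 1 < q.

Lemma exp_class_redq c : 0 < c -> exp_class q (redq q c) = exp_class q c.
Proof. by move=> c_gt0; rewrite !exp_classE // redq_idem. Qed.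

Lemma pmap_id x : inK x -> pmap x = x.
Proof.
case: x => a b; rewrite /inK /inAX /pmap /= => /andP [Ka Kb].
have -> : pmap_d2 a = a.
  rewrite /pmap_d2; case: ifP => // /norP [a_neq0 not_A].
  by move: Ka; rewrite (negPf not_A) orbF => Ka; apply: redq_small; lia.
have [-> //|b_neq0] := eqVneq b 0.
have [b_eq|b_neq] := eqVneq (eta * a + b) D; first by congr pair; lia.
by rewrite redq_small //; move: Kb b_neq b_neq0; case/orP => [/andP[]|]; lia.
Qed.

Lemma pmap_inK x : inP x -> inK (pmap x).
Proof.
case: x => d2 c2; rewrite /inP /pmap /= => /andP [d2_le c2_le].
have e_le : eta * pmap_d2 d2 <= eta * d2 by rewrite leq_mul2l leq_pmap_d2 orbT.
have Ke : inAX (pmap_d2 d2).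
  rewrite /inAX; move: e_le; rewrite /pmap_d2; case: ifP => [/orP [/eqP ->|->]|/norP [d2_neq0 _]].
  - by rewrite muln0; lia.
  - by rewrite orbT.
  - have d2_gt0 : 0 < d2 by rewrite lt0n.
    by have := leq_redq q d2 d2_gt0; have := redq_leq q d2 q_gt1; lia.
rewrite /inK /= Ke /=.
have [c2_eq0|c2_gt0] := posnP c2; first lia.
have [|] := eqVneq (eta * d2 + c2) D; first lia.
by have := leq_redq q c2 c2_gt0; have := redq_leq q c2 q_gt1; lia.
Qed.

Lemma pmap_d2_spec d2 : d2 <= dX -> eta * d2 <= D ->
  exists k, [/\ d2 = pmap_d2 d2 + k * q.-1, exp_class q (pmap_d2 d2) = exp_class q d2
    & pmap_d2 d2 = d2 \/ d2 < dX /\ (eta * d2 = D -> eta = 0)].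
Proof.
move=> d2_le eta_d2_le; rewrite /pmap_d2; case: ifP => [_|/norP [d2_neq0 not_A]].
  by exists 0; split => //; [rewrite addn0 | left].
have d2_gt0 : 0 < d2 by rewrite lt0n.
exists (d2.-1 %/ q.-1); split; first exact: redq_div_eq.
- exact: exp_class_redq.
- by right; move: not_A; rewrite /is_A d2_le eta_d2_le /=; lia.
Qed.

Lemma signature_pmap x : inP x -> signature (pmap x) = signature x.
Proof.
case: x => d2 c2; rewrite /inP /signature /pmap /Mnat /= => /andP [d2_le c2_le].
have [|k [d2_eq e_class e_cases]] := pmap_d2_spec d2 d2_le; first lia.
move: (pmap_d2 d2) d2_eq e_class e_cases => e d2_eq e_class e_cases.
rewrite e_class.
have [-> /=|c2_neq0] := eqVneq c2 0.
  by congr (_, _, _, _); case: e_cases => [->|]; nia.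
have c2_gt0 : 0 < c2 by rewrite lt0n.
have [c2_eq|c2_neq] := eqVneq (eta * d2 + c2) D.
  have -> : D - eta * e = c2 + (eta * k) * q.-1 by rewrite -mulnA; nia.
  rewrite [exp_class q (c2 + _)]exp_classE ?(ltn_addr _ c2_gt0) // redqDM // -exp_classE //.
  by congr (_, _, _, _); case: e_cases => [->|]; nia.
have r_le := leq_redq q c2 c2_gt0; rewrite exp_class_redq //.
by congr (_, _, _, _); case: e_cases => [->|]; nia.
Qed.

Lemma is_A_signature x y : inP x -> inP y ->
  signature x = signature y -> is_A x.1 -> x.1 = y.1.
Proof.
case: x y => d2 c2 [d2' c2']; rewrite /inP /signature /Mnat /is_A /=.
move=> /andP [d2_le c2_le] /andP [d2'_le c2'_le] [c2_class _ c1_eq0 d1_eq0].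
case/and3P => _ _ /orP [/eqP d2_eq|/andP [/eqP eta_d2 eta_gt0]].
  by move: d1_eq0; rewrite d2_eq subnn eqxx => /esym/eqP; lia.
have c2_eq0 : c2 = 0 by lia.
have c2'_eq0 : c2' = 0 by apply/eqP; rewrite -(exp_class_eq0 q) -c2_class c2_eq0.
move: c1_eq0; rewrite c2_eq0 c2'_eq0 !addn0 eta_d2 subnn eqxx => /esym/eqP c1'_eq0.
by apply/eqP; rewrite -(eqn_pmul2l eta_gt0) eta_d2; apply/eqP; lia.
Qed.

Lemma pmap_d2_signature x y : inP x -> inP y ->
  signature x = signature y -> pmap_d2 x.1 = pmap_d2 y.1.
Proof.
move=> Px Py sig_eq.
case A_x: (is_A x.1); first by rewrite (is_A_signature _ _ Px Py sig_eq A_x).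
case A_y: (is_A y.1); first by rewrite (is_A_signature _ _ Py Px (esym sig_eq) A_y).
rewrite !pmap_d2E ?A_x ?A_y //.
by case: x y sig_eq {Px Py A_x A_y} => d2 c2 [d2' c2'] [].
Qed.

Lemma signature_pmapP x y : inP x -> inP y ->
  signature x = signature y <-> pmap x = pmap y.
Proof.
move=> Px Py; split=> [sig_eq|pmap_eq]; last first.
  by rewrite -(signature_pmap _ Px) -(signature_pmap _ Py) pmap_eq.
have e_eq := pmap_d2_signature _ _ Px Py sig_eq.
case: x y sig_eq e_eq Px Py => d2 c2 [d2' c2'] /=; rewrite /signature /Mnat /inP /=.
move=> [c2_class _ c1_eq0 _] e_eq /andP [_ c2_le] /andP [_ c2'_le]; rewrite e_eq.
have [c2_eq0|c2_neq0] := eqVneq c2 0.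
  by have -> : c2' = 0 by apply/eqP; rewrite -(exp_class_eq0 q) -c2_class c2_eq0.
have c2'_neq0 : c2' != 0 by rewrite -(exp_class_eq0 q) -c2_class exp_class_eq0.
rewrite (negPf c2'_neq0).
have [diag|off_diag] := eqVneq (eta * d2 + c2) D.
  have -> : eta * d2' + c2' = D by move: c1_eq0; lia.
  by rewrite eqxx.
have -> : (eta * d2' + c2' == D) = false by apply/eqP; move: c1_eq0; lia.
by rewrite -!exp_classE ?lt0n // c2_class.
Qed.

End NatModel.

Section Translation.
Context {eta : nat} {dT : int} {dX D : nat}.
Hypothesis hD : hdelta eta dT dX = D%:Z.

Lemma eq_Aval a : ((a%:R : rat) == Aval eta dT dX) = is_A eta dX D a.
Proof.
rewrite /Aval /is_A; have := hD; rewrite /hdelta => hD'; case: ifP => dT_ge0.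
- have eta_dX_le : (eta * dX <= D)%N by move: hD' dT_ge0; move: (eta * dX)%N => m; lia.
  rewrite eqr_nat; have [->|a_neq] := eqVneq a dX; first by rewrite leqnn eta_dX_le.
  by apply/esym/negbTE/negP => /and3P [? ? /andP [/eqP ? ?]]; nia.
- have D_lt : (D < eta * dX)%N by move: hD' dT_ge0; move: (eta * dX)%N => m; lia.
  have eta_gt0 : (0 < eta)%N by case: eta D_lt {hD'} => //; rewrite mul0n.
  rewrite hD' -[a%:R]divr1 eqr_div ?oner_eq0 ?pnatr_eq0 -?lt0n // mulr1.
  rewrite [(D%:Z)%:~R]/= -natrM eqr_nat eta_gt0 andbT.
  apply/eqP/and3P => [aeta_eq|[? ? /orP [/eqP ?|/eqP ?]]]; last 2 first; [nia | nia |].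
  by split; [nia | nia | apply/orP; right; apply/eqP; nia].
Qed.

Lemma le_floor_Aval a :
  (a%:Z <= Num.floor (Aval eta dT dX)) = (a <= dX)%N && (eta * a <= D)%N.
Proof.
rewrite /Aval floor_ge_int; have := hD; rewrite /hdelta => hD'; case: ifP => dT_ge0.
- have eta_dX_le : (eta * dX <= D)%N by move: hD' dT_ge0; move: (eta * dX)%N => m; lia.
  by rewrite [(a%:Z)%:~R]/= ler_nat; case: leqP => a_le //=; apply/esym; nia.
- have D_lt : (D < eta * dX)%N by move: hD' dT_ge0; move: (eta * dX)%N => m; lia.
  have eta_gt0 : (0 < eta)%N by case: eta D_lt {hD'} => //; rewrite mul0n.
  rewrite hD' [(a%:Z)%:~R]/= [(D%:Z)%:~R]/= ler_pdivlMr ?ltr0n // -natrM ler_nat.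
  by case: leqP => a_le; apply/esym; [apply/andP; split|]; nia.
Qed.

Lemma Pset_inP x : Pset eta dT dX x <-> inP eta dX D x.
Proof. by rewrite /Pset /inP hD lez_nat; split => [[-> ->]|/andP[-> ->]]. Qed.

Lemma Kset_inK q x : Kset q eta dT dX x <-> inK q eta dX D x.
Proof.
case: x => a b; rewrite /Kset /inK /=.
have AX_iff : AXset q eta dT dX a <-> inAX q eta dX D a.
  rewrite /AXset /inAX -eq_Aval le_floor_Aval.
  split => [[[-> ->] //|->]|/orP [/andP [/andP [-> ->] ->]|/eqP]];
    by [rewrite eqxx orbT | left | right].
have c2_iff : (b%:Z <= Num.min (hdelta eta dT dX - (eta * a)%N%:Z) q%:Z - 1 \/
               b%:Z = hdelta eta dT dX - (eta * a)%N%:Z) <->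
              ((eta * a + b < D) && (b < q) || (eta * a + b == D))%N.
  rewrite hD lerBrDr le_min; move: (eta * a)%N => m.
  split => [[/andP [? ?]|?]|/orP [/andP [? ?]|/eqP ?]].
  - by apply/orP; left; apply/andP; split; lia.
  - by apply/orP; right; apply/eqP; lia.
  - by left; apply/andP; split; lia.
  - by right; lia.
by rewrite AX_iff c2_iff; split => [[-> ->]|/andP].
Qed.

Lemma Mmono_Mnat x : inP eta dX D x -> Mmono eta dT dX x = Mnat eta dX D x.
Proof. by case: x => d2 c2 /andP [_ c2_le]; rewrite /Mmono /Mnat hD subzn. Qed.

Lemma pHmap_pmap q x : inP eta dX D x -> pHmap q eta dT dX x = pmap q eta dX D x.
Proof.
case: x => d2 c2 /andP [/= d2_le c2_le].
rewrite /pHmap /pmap eq_Aval -/(pmap_d2 _ _ _ _ d2).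
have : (eta * pmap_d2 q eta dX D d2 <= eta * d2)%N by rewrite leq_mul2l leq_pmap_d2 orbT.
have -> : (c2%:Z == hdelta eta dT dX - (eta * d2)%N%:Z) = (eta * d2 + c2 == D)%N.
  by rewrite hD; apply/eqP/eqP; move: (eta * d2)%N c2_le => m; lia.
by move=> e_le; rewrite hD subzn //; lia.
Qed.

Lemma P_equivE (F : finFieldType) x y : inP eta dX D x -> inP eta dX D y ->
  P_equiv F eta dT dX x y <-> signature #|F| eta dX D x = signature #|F| eta dX D y.
Proof.
by move=> Px Py; rewrite /P_equiv (Mmono_Mnat _ Px) (Mmono_Mnat _ Py) mono_equivP.
Qed.

Lemma bideg_Mnat x : inP eta dX D x -> bideg eta (Mnat eta dX D x) = (dT, dX).
Proof.
case: x => d2 c2 /andP [/= d2_le c2_le]; rewrite /bideg /Mnat /=.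
have : (eta * d2 <= eta * dX)%N by rewrite leq_mul2l d2_le orbT.
move=> le_eta; rewrite mulnBr; congr pair; last lia.
by move: hD; rewrite /hdelta; move: (eta * d2)%N (eta * dX)%N c2_le le_eta => u v; lia.
Qed.

Lemma bideg_inP m : bideg eta m = (dT, dX) ->
  exists2 x, inP eta dX D x & m = Mnat eta dX D x.
Proof.
case: m => [[[c1 c2] d1] d2] [c_eq d_eq].
have eta_dX : (eta * dX = eta * d1 + eta * d2)%N by rewrite -d_eq mulnDr.
have D_eq : D = (c1 + c2 + eta * d2)%N.
  by move: hD; rewrite /hdelta -c_eq eta_dX; move: (eta * d1)%N (eta * d2)%N => u v; lia.
by exists (d2, c2); rewrite /inP /Mnat /=; [apply/andP; split | congr (_, _, _, _)]; lia.
Qed.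

End Translation.

Section Representatives.
Variable F : finFieldType.
Context {eta : nat} {dT : int} {dX : nat}.
Hypothesis delta_ge0 : 0 <= hdelta eta dT dX.

Let D := `|hdelta eta dT dX|%N.
Let hD : hdelta eta dT dX = D%:Z. Proof. by rewrite /D gez0_abs. Qed.
Let q_gt1 : (1 < #|F|)%N. Proof. exact: card_finNzRing_gt1. Qed.

Lemma Kset_Pset y : Kset #|F| eta dT dX y -> Pset eta dT dX y.
Proof. by move/(Kset_inK hD)/inK_inP/(Pset_inP hD). Qed.

Lemma pHmap_Kset x : Pset eta dT dX x -> Kset #|F| eta dT dX (pHmap #|F| eta dT dX x).
Proof.
by move/(Pset_inP hD) => Px; rewrite (pHmap_pmap hD) //; apply/(Kset_inK hD)/pmap_inK.
Qed.

Lemma pHmap_id y : Kset #|F| eta dT dX y -> pHmap #|F| eta dT dX y = y.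
Proof.
by move/(Kset_inK hD) => Ky; rewrite (pHmap_pmap hD) ?pmap_id //; exact: inK_inP Ky.
Qed.

Lemma P_equiv_pHmap x y : Pset eta dT dX x -> Pset eta dT dX y ->
  P_equiv F eta dT dX x y <-> pHmap #|F| eta dT dX x = pHmap #|F| eta dT dX y.
Proof.
move=> /(Pset_inP hD) Px /(Pset_inP hD) Py.
by rewrite (P_equivE hD) // !(pHmap_pmap hD) // signature_pmapP.
Qed.

Lemma P_equiv_Kset x y : Pset eta dT dX x -> Kset #|F| eta dT dX y ->
  P_equiv F eta dT dX x y <-> pHmap #|F| eta dT dX x = y.
Proof. by move=> Px Ky; rewrite P_equiv_pHmap ?(pHmap_id _ Ky) //; exact: Kset_Pset. Qed.

Lemma Mmono_bideg x : Pset eta dT dX x -> bideg eta (Mmono eta dT dX x) = (dT, dX).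
Proof. by move/(Pset_inP hD) => Px; rewrite (Mmono_Mnat hD) ?(bideg_Mnat hD). Qed.

Lemma bideg_Mmono m : bideg eta m = (dT, dX) ->
  exists2 x, Pset eta dT dX x & m = Mmono eta dT dX x.
Proof.
move/(bideg_inP hD) => [x Px ->].
by exists x; [apply/(Pset_inP hD) | rewrite (Mmono_Mnat hD)].
Qed.

End Representatives.

Theorem proposition2p13 (F : finFieldType) (eta : nat) (dT : int) (dX : nat) :
  let q := #|F| in
  0 <= hdelta eta dT dX ->
  (* (1) p induces a bijection from P / == onto K *)
  ((forall x, Pset eta dT dX x -> Kset q eta dT dX (pHmap q eta dT dX x)) /\
   (forall y, Kset q eta dT dX y ->
      exists2 x, Pset eta dT dX x & pHmap q eta dT dX x = y) /\
   (forall x y, Pset eta dT dX x -> Pset eta dT dX y ->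
      (P_equiv F eta dT dX x y <-> pHmap q eta dT dX x = pHmap q eta dT dX y)))
  /\
  (* (2) K is a set of representatives of P under == *)
  ((forall y, Kset q eta dT dX y -> Pset eta dT dX y) /\
   (forall x, Pset eta dT dX x ->
      exists! y, Kset q eta dT dX y /\ P_equiv F eta dT dX x y))
  /\
  (* (3) Delta is a set of representatives of the monomials of
         bidegree (dT, dX) under == *)
  ((forall m, Deltaset q eta dT dX m -> bideg eta m = (dT, dX)) /\
   (forall m, bideg eta m = (dT, dX) ->
      exists! m', Deltaset q eta dT dX m' /\ mono_equiv F m m')).
Proof.
move=> q delta_ge0.
have Kset_Pset := Kset_Pset F delta_ge0; have pHmap_Kset := pHmap_Kset F delta_ge0.
have P_equiv_Kset := P_equiv_Kset F delta_ge0.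
split; [split; [|split] | split; split] => //.
- by move=> y Ky; exists y; [apply: Kset_Pset | apply: pHmap_id].
- exact: P_equiv_pHmap.
- move=> x Px; have Kpx := pHmap_Kset x Px.
  exists (pHmap q eta dT dX x); split; first by split; last apply/(P_equiv_Kset _ _ Px Kpx).
  by move=> y [Ky /(P_equiv_Kset _ _ Px Ky)].
- by move=> m [k /Kset_Pset Pk ->]; apply: Mmono_bideg.
- move=> m /(bideg_Mmono delta_ge0) [x Px ->]; have Kpx := pHmap_Kset x Px.
  exists (Mmono eta dT dX (pHmap q eta dT dX x)); split.
    by split; [exists (pHmap q eta dT dX x) | apply/(P_equiv_Kset _ _ Px Kpx)].
  by move=> _ [[k Kk ->] /(P_equiv_Kset _ _ Px Kk) ->].
Qed.
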